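(* Let $p\ge 2$, let $\mathcal{N}$ be a finite nonempty index set, let $\{\hat{\bm{\Sigma}}(t_i)\}_{i\in\mathcal{N}}$ be $p\times p$ symmetric positive semidefinite matrices, and let $\lambda>0$. For a tuple $\mathbb{\Omega}=\{\bm{\Omega}(t_i)\}_{i\in\mathcal{N}}$ of $p\times p$ symmetric positive definite matrices define $$L(\mathbb{\Omega})=\frac{1}{\sqrt{|\mathcal{N}|}}\sum_{i\in\mathcal{N}}\Big[\operatorname{tr}\big(\bm{\Omega}(t_i)\hat{\bm{\Sigma}}(t_i)\big)-\log\det\bm{\Omega}(t_i)\Big]+\lambda\sum_{u\neq v}\sqrt{\sum_{i\in\mathcal{N}}\Omega_{uv}(t_i)^2},$$ where $\Omega_{uv}(t_i)$ denotes the $(u,v)$ entry of $\bm{\Omega}(t_i)$. Suppose the minimizer $\{\hat{\bm{\Omega}}(t_i)\}_{i\in\mathcal{N}}$ of $L$ over tuples of positive definite matrices has, after a common permutation of the $p$ variables, the block-diagonal form $$\hat{\bm{\Omega}}(t_i)=\begin{pmatrix}\hat{\bm{\Omega}}_1(t_i)&\bm{0}\\ \bm{0}&\hat{\bm{\Omega}}_2(t_i)\end{pmatrix},\qquad i\in\mathcal{N},$$ where all $\hat{\bm{\Omega}}_1(t_i)$ have the same dimension, corresponding to a set $G_1$ of variables, and the $\hat{\bm{\Omega}}_2(t_i)$ correspond to the complementary set $G_2$. Then $\{\hat{\bm{\Omega}}_1(t_i)\}_{i\in\mathcal{N}}$ minimizes the objective of the same form as $L$ (same $\mathcal{N}$,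 same $\lambda$) in which each $\hat{\bm{\Sigma}}(t_i)$ is replaced by its principal submatrix on the variables in $G_1$, and likewise $\{\hat{\bm{\Omega}}_2(t_i)\}_{i\in\mathcal{N}}$ minimizes the analogous objective on the variables in $G_2$.
   Context: In the paper, $\mathcal{N}=\mathcal{N}_{k,d}=\{i:|t_i-t_k|\le d\}$ is the set of indices of observation times $0\le t_1\le\dots\le t_N\le 1$ within distance $d$ of $t_k$, and $\hat{\bm{\Sigma}}(t)=\sum_{j=1}^N \omega_h^{t_j}(t)\bm{x}_j\bm{x}_j^T$ is a kernel estimate of the covariance matrix, with weights $\omega_h^{t_j}(t)=K((t_j-t)/h)/\sum_{j'}K((t_{j'}-t)/h)$ for a symmetric nonnegative kernel $K$ and bandwidth $h>0$, based on observations $\bm{x}_j\in\mathbb{R}^p$. The objective $L$ is strictly convex, so its minimizer, when it exists, is unique. *)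

From HB Require Import structures.
From mathcomp Require Import all_boot all_order all_algebra.
From mathcomp Require Import all_classical all_reals.
From mathcomp Require Import exp.
Set Implicit Arguments. Unset Strict Implicit. Unset Printing Implicit Defensive.
Import Order.TTheory GRing.Theory Num.Theory.
Local Open Scope ring_scope.

Definition psd_mx (R : realType) (n : nat) (A : 'M[R]_n) : Prop :=
  A^T = A /\ forall v : 'rV[R]_n, 0 <= (v *m A *m v^T) 0 0.

Definition pd_mx (R : realType) (n : nat) (A : 'M[R]_n) : Prop :=
  A^T = A /\ forall v : 'rV[R]_n, v != 0 -> 0 < (v *m A *m v^T) 0 0.

(* The objective L: I is the finite index set N, S i = Sigma-hat(t_i),
   W i = Omega(t_i). *)
Definition objL (R : realType) (I : finType) (n : nat) (lam : R)
    (S W : I -> 'M[R]_n) : R :=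
  (Num.sqrt (#|I|%:R))^-1 *
    (\sum_(i : I) (\tr (W i *m S i) - ln (\det (W i))))
  + lam * \sum_(u : 'I_n) \sum_(v : 'I_n | u != v)
              Num.sqrt (\sum_(i : I) (W i u v) ^+ 2).

Definition is_minimizer (R : realType) (I : finType) (n : nat) (lam : R)
    (S Wh : I -> 'M[R]_n) : Prop :=
  (forall i, pd_mx (Wh i)) /\
  forall W : I -> 'M[R]_n, (forall i, pd_mx (W i)) ->
    objL lam S Wh <= objL lam S W.

Definition subm (R : realType) (p : nat) (G : {set 'I_p}) (A : 'M[R]_p)
    : 'M[R]_#|G| :=
  \matrix_(a < #|G|, b < #|G|) A (enum_val a) (enum_val b).

From HB Require Import structures.
From mathcomp Require Import all_boot all_order all_algebra.
From mathcomp Require Import all_classical all_reals.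
From mathcomp Require Import exp polyrcf.
Set Implicit Arguments. Unset Strict Implicit. Unset Printing Implicit Defensive.
Import Order.TTheory GRing.Theory Num.Theory.
Local Open Scope ring_scope.

(* The objective is invariant under a simultaneous relabelling of rows and
   columns, so listing the variables of G1 first and those of its complement
   next turns the minimizer into a block-diagonal minimizer.  For
   block-diagonal arguments the objective is the sum of the two block
   objectives: trace and log-determinant are additive over diagonal blocks
   (the latter because positive definite matrices have positive determinant),
   and the penalty terms coupling the two blocks vanish.  Replacing one block
   by a competitor therefore changes only its own summand, so each block
   minimizes its own objective. *)

Lemma horner_char_poly (R : comNzRingType) n (A : 'M[R]_n) x :
  (char_poly A).[x] = \det (x%:M - A).
Proof.
rewrite -horner_evalE -det_map_mx; congr (\det _).
apply/matrixP=> i j; rewrite !mxE rmorphB rmorphMn /= horner_evalE hornerX.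
by rewrite horner_evalE hornerC.
Qed.

Lemma monic_horner0_gt0 (R : rcfType) (q : {poly R}) :
  q \is monic -> (forall x, 0 <= x -> ~~ root q x) -> 0 < q.[0].
Proof.
move=> /monicP q_monic q_noroot.
have lc_gt0 : 0 < lead_coef q by rewrite q_monic ltr01.
have [N qN] := poly_pinfty_gt_lc lc_gt0.
pose b := Num.max N 0.
have b_ge0 : 0 <= b by rewrite le_max lexx orbT.
have qb_ge1 : 1 <= q.[b] by rewrite -q_monic; apply: qN; rewrite le_max lexx.
rewrite ltNge; apply/negP => q0_le0.
have q0qb_le0 : q.[0] * q.[b] <= 0.
  exact: mulr_le0_ge0 q0_le0 (le_trans ler01 qb_ge1).
have [x x_in qx] := polyrcf.poly_ivt b_ge0 q0qb_le0.
move: x_in; rewrite in_itv /= => /andP [x_ge0 _].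
by move: (q_noroot x x_ge0); rewrite qx.
Qed.

Lemma mul_tr_row_ge0 (R : realType) n (v : 'rV[R]_n) : 0 <= (v *m v^T) 0 0.
Proof. by rewrite mxE; apply: sumr_ge0 => j _; rewrite mxE -expr2 sqr_ge0. Qed.

Lemma pd_mx_qform_ge0 (R : realType) n (A : 'M[R]_n) (v : 'rV[R]_n) :
  pd_mx A -> 0 <= (v *m A *m v^T) 0 0.
Proof.
move=> [_ A_pos]; have [->|v_neq0] := eqVneq v 0; first by rewrite !mul0mx mxE.
exact: ltW (A_pos v v_neq0).
Qed.

Lemma pd_mx_scalar_add (R : realType) n (x : R) (A : 'M[R]_n) :
  0 <= x -> pd_mx A -> pd_mx (x%:M + A).
Proof.
move=> x_ge0 [A_sym A_pos]; split; first by rewrite linearD /= tr_scalar_mx A_sym.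
move=> v v_neq0; rewrite mulmxDr mulmxDl mxE mul_mx_scalar -scalemxAl.
rewrite [X in X + _]mxE.
exact: ltr_wpDl (mulr_ge0 x_ge0 (mul_tr_row_ge0 v)) (A_pos v v_neq0).
Qed.

Lemma pd_det_neq0 (R : realType) n (A : 'M[R]_n) : pd_mx A -> \det A != 0.
Proof.
move=> [_ A_pos]; apply/negP => /det0P [v v_neq0 vA0].
by have := A_pos v v_neq0; rewrite vA0 mul0mx mxE ltxx.
Qed.

Lemma pd_det_gt0 (R : realType) n (A : 'M[R]_n) : pd_mx A -> 0 < \det A.
Proof.
move=> A_pd.
have detE x : (char_poly (- A)).[x] = \det (x%:M + A).
  by rewrite horner_char_poly opprK.
have -> : \det A = (char_poly (- A)).[0] by rewrite detE raddf0 add0r.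
apply: monic_horner0_gt0; first exact: char_poly_monic.
by move=> x x_ge0; rewrite /root detE; apply/pd_det_neq0/pd_mx_scalar_add.
Qed.

Section Relabel.
Variables (m n : nat) (g : 'I_m -> 'I_n).
Hypothesis g_bij : bijective g.

Lemma mul_colsub_rowsub (R : pzSemiRingType) p q (A : 'M[R]_(p, n))
    (B : 'M[R]_(n, q)) :
  colsub g A *m rowsub g B = A *m B.
Proof.
apply/matrixP => i j; rewrite !mxE (reindex g (onW_bij _ g_bij)).
by apply: eq_bigr => k _; rewrite !mxE.
Qed.

Lemma mxsub_mulmx (R : pzSemiRingType) (A B : 'M[R]_n) :
  mxsub g g (A *m B) = mxsub g g A *m mxsub g g B.
Proof. by rewrite (mxsubcr g g A) (mxsubrc g g B) mul_colsub_rowsub mxsub_mul. Qed.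

Lemma mxtrace_mxsub (R : pzSemiRingType) (A : 'M[R]_n) :
  \tr (mxsub g g A) = \tr A.
Proof.
rewrite /mxtrace [RHS](reindex g (onW_bij _ g_bij)).
by apply: eq_bigr => i _; rewrite mxE.
Qed.

Lemma det_mxsub (R : comNzRingType) (A : 'M[R]_n) : \det (mxsub g g A) = \det A.
Proof.
have mn : m = n by have := bij_eq_card g_bij; rewrite !card_ord.
subst m.
have mxsub1 : mxsub g g (1%:M : 'M[R]_n) = 1%:M.
  by apply/matrixP => i j; rewrite !mxE (bij_eq g_bij).
have -> : mxsub g g A = rowsub g 1%:M *m A *m colsub g 1%:M.
  by rewrite mul_rowsub_mx mul1mx mulmx_colsub mulmx1 -mxsubcr.
by rewrite !det_mulmx mulrAC -det_mulmx -mxsub_mul mulmx1 mxsub1 det1 mul1r.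
Qed.

Lemma qform_mxsub (R : pzSemiRingType) (A : 'M[R]_n) (v : 'rV[R]_n) :
  colsub g v *m mxsub g g A *m (colsub g v)^T = v *m A *m v^T.
Proof.
rewrite (mxsubrc g g A) mul_colsub_rowsub mulmx_colsub trmx_mxsub.
exact: mul_colsub_rowsub.
Qed.

Lemma pd_mxsub (R : realType) (A : 'M[R]_n) : pd_mx A -> pd_mx (mxsub g g A).
Proof.
move=> [A_sym A_pos]; split; first by rewrite trmx_mxsub A_sym.
have [h gK _] := g_bij.
move=> w w_neq0; have wE : w = colsub g (colsub h w).
  by apply/matrixP => i j; rewrite !mxE gK.
rewrite wE qform_mxsub; apply: A_pos; apply: contra_neq w_neq0 => v0.
by rewrite wE v0; apply/matrixP => i j; rewrite !mxE.
Qed.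

Lemma objL_mxsub (R : realType) (I : finType) (lam : R) (S W : I -> 'M[R]_n) :
  objL lam (fun i => mxsub g g (S i)) (fun i => mxsub g g (W i)) = objL lam S W.
Proof.
rewrite /objL; congr (_ * _ + _ * _).
  by apply: eq_bigr => i _; rewrite -mxsub_mulmx mxtrace_mxsub det_mxsub.
rewrite [RHS](reindex g (onW_bij _ g_bij)); apply: eq_bigr => u _.
rewrite [RHS](reindex g (onW_bij _ g_bij)); apply: eq_big => [v | v _].
  by rewrite (bij_eq g_bij).
by congr Num.sqrt; apply: eq_bigr => i _; rewrite mxE.
Qed.

End Relabel.

Lemma is_minimizer_mxsub (R : realType) (I : finType) m n (g : 'I_m -> 'I_n)
    (lam : R) (S Wh : I -> 'M[R]_n) :
  bijective g -> is_minimizer lam S Wh ->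
  is_minimizer lam (fun i => mxsub g g (S i)) (fun i => mxsub g g (Wh i)).
Proof.
move=> g_bij [Wh_pd Wh_min]; split=> [i | W W_pd]; first exact: pd_mxsub.
have [h gK hK] := g_bij; have h_bij : bijective h by exists g.
have mxsubK i : mxsub g g (mxsub h h (W i)) = W i.
  by rewrite -mxsub_comp; exact: (mxsub_eq_id (f := h \o g) (g := h \o g) gK gK).
rewrite objL_mxsub //.
apply: le_trans (Wh_min _ (fun i => pd_mxsub h_bij (W_pd i))) _.
by rewrite -(objL_mxsub g_bij) (funext mxsubK).
Qed.

Lemma sum_offdiag_block (V : nmodType) n1 n2
    (F : 'I_(n1 + n2) -> 'I_(n1 + n2) -> V) :
  (forall a b, F (lshift n2 a) (rshift n1 b) = 0) ->
  (forall a b, F (rshift n1 b) (lshift n2 a) = 0) ->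
  \sum_u \sum_(v | u != v) F u v =
    \sum_(a < n1) \sum_(b | a != b) F (lshift n2 a) (lshift n2 b) +
    \sum_(a < n2) \sum_(b | a != b) F (rshift n1 a) (rshift n1 b).
Proof.
move=> F_ur F_dl; rewrite big_split_ord; congr (_ + _); apply: eq_bigr => a _.
  rewrite big_split_ord /= [X in _ + X]big1 ?addr0 => [|b _]; last exact: F_ur.
  by apply: eq_bigl => b; rewrite (inj_eq (@lshift_inj _ _)).
rewrite big_split_ord /= [X in X + _]big1 ?add0r => [|b _]; last exact: F_dl.
by apply: eq_bigl => b; rewrite (inj_eq (@rshift_inj _ _)).
Qed.

Lemma qform_block_diag (R : pzSemiRingType) n1 n2
    (A1 : 'M[R]_n1) (A2 : 'M[R]_n2) (v1 : 'rV[R]_n1) (v2 : 'rV[R]_n2) :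
  row_mx v1 v2 *m block_mx A1 0 0 A2 *m (row_mx v1 v2)^T =
  v1 *m A1 *m v1^T + v2 *m A2 *m v2^T.
Proof. by rewrite mul_row_block !mulmx0 addr0 add0r tr_row_mx mul_row_col. Qed.

Lemma pd_block_diag (R : realType) n1 n2 (A1 : 'M[R]_n1) (A2 : 'M[R]_n2) :
  pd_mx (block_mx A1 0 0 A2) <-> pd_mx A1 /\ pd_mx A2.
Proof.
have qform0 k (B : 'M[R]_k) : (0 : 'rV[R]_k) *m B *m 0^T = 0 by rewrite !mul0mx.
split=> [[A_sym A_pos] | [[A1_sym A1_pos] [A2_sym A2_pos]]].
  move: A_sym; rewrite tr_block_mx !trmx0 => /eq_block_mx [A1_sym _ _ A2_sym].
  split; split=> // v v_neq0.
    have := A_pos (row_mx v 0); rewrite qform_block_diag qform0 addr0; apply.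
    by rewrite row_mx_eq0 negb_and v_neq0.
  have := A_pos (row_mx 0 v); rewrite qform_block_diag qform0 add0r; apply.
  by rewrite row_mx_eq0 negb_and v_neq0 orbT.
split=> [|v]; first by rewrite tr_block_mx !trmx0 A1_sym A2_sym.
rewrite -(hsubmxK v) qform_block_diag mxE row_mx_eq0 negb_and.
case/orP=> v_neq0.
  by apply: ltr_pwDl (A1_pos _ v_neq0) (pd_mx_qform_ge0 _ (conj A2_sym A2_pos)).
by apply: ltr_wpDl (pd_mx_qform_ge0 _ (conj A1_sym A1_pos)) (A2_pos _ v_neq0).
Qed.

Lemma objL_block_diag (R : realType) (I : finType) n1 n2 (lam : R)
    (S : I -> 'M[R]_(n1 + n2)) (W1 : I -> 'M[R]_n1) (W2 : I -> 'M[R]_n2) :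
  (forall i, pd_mx (W1 i)) -> (forall i, pd_mx (W2 i)) ->
  objL lam S (fun i => block_mx (W1 i) 0 0 (W2 i)) =
  objL lam (fun i => ulsubmx (S i)) W1 + objL lam (fun i => drsubmx (S i)) W2.
Proof.
move=> W1_pd W2_pd; rewrite /objL.
have fit_split : \sum_i (\tr (block_mx (W1 i) 0 0 (W2 i) *m S i)
                         - ln (\det (block_mx (W1 i) 0 0 (W2 i)))) =
    \sum_i (\tr (W1 i *m ulsubmx (S i)) - ln (\det (W1 i))) +
    \sum_i (\tr (W2 i *m drsubmx (S i)) - ln (\det (W2 i))).
  rewrite -big_split; apply: eq_bigr => i _ /=.
  rewrite -{1}(submxK (S i)) mulmx_block !mul0mx !addr0 !add0r mxtrace_block.
  by rewrite det_ublock lnM ?posrE ?pd_det_gt0 // opprD addrACA.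
have penalty_split :
    \sum_u \sum_(v | u != v)
       Num.sqrt (\sum_i block_mx (W1 i) 0 0 (W2 i) u v ^+ 2) =
    \sum_u \sum_(v | u != v) Num.sqrt (\sum_i W1 i u v ^+ 2) +
    \sum_u \sum_(v | u != v) Num.sqrt (\sum_i W2 i u v ^+ 2).
  rewrite sum_offdiag_block => [|a b|a b].
  - congr (_ + _); apply: eq_bigr => a _; apply: eq_bigr => b _.
      by congr Num.sqrt; apply: eq_bigr => i _; rewrite block_mxEul.
    by congr Num.sqrt; apply: eq_bigr => i _; rewrite block_mxEdr.
  - by rewrite big1 ?sqrtr0 // => i _; rewrite block_mxEur mxE expr0n.
  - by rewrite big1 ?sqrtr0 // => i _; rewrite block_mxEdl mxE expr0n.
by rewrite fit_split penalty_split !mulrDr addrACA.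
Qed.

Lemma is_minimizer_block_diag (R : realType) (I : finType) n1 n2 (lam : R)
    (S : I -> 'M[R]_(n1 + n2)) (W1 : I -> 'M[R]_n1) (W2 : I -> 'M[R]_n2) :
  is_minimizer lam S (fun i => block_mx (W1 i) 0 0 (W2 i)) ->
  is_minimizer lam (fun i => ulsubmx (S i)) W1 /\
  is_minimizer lam (fun i => drsubmx (S i)) W2.
Proof.
move=> [W_pd W_min].
have W1_pd i : pd_mx (W1 i) by have [] := (pd_block_diag _ _).1 (W_pd i).
have W2_pd i : pd_mx (W2 i) by have [] := (pd_block_diag _ _).1 (W_pd i).
split; split=> // V V_pd.
  have := W_min _ (fun i => (pd_block_diag _ (W2 i)).2 (conj (V_pd i) (W2_pd i))).
  by rewrite !objL_block_diag // lerD2r.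
have := W_min _ (fun i => (pd_block_diag (W1 i) _).2 (conj (W1_pd i) (V_pd i))).
by rewrite !objL_block_diag // lerD2l.
Qed.

Section SplitEnum.
Variables (T : finType) (G : {set T}).

Definition split_enum (k : 'I_(#|G| + #|~: G|)) : T :=
  match fintype.split k with inl a => enum_val a | inr b => enum_val b end.

Lemma split_enum_lshift a : split_enum (lshift _ a) = enum_val a.
Proof. by rewrite /split_enum (unsplitK (inl _ a)). Qed.

Lemma split_enum_rshift b : split_enum (rshift _ b) = enum_val b.
Proof. by rewrite /split_enum (unsplitK (inr _ b)). Qed.

Lemma split_enum_bij : bijective split_enum.
Proof.
apply: inj_card_bij; last by rewrite card_ord cardsC.
have notinC (a : 'I_#|G|) (b : 'I_#|~: G|) : enum_val a != enum_val b.
  by apply: contraTneq (enum_valP b) => <-; rewrite finset.in_setC (enum_valP a).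
move=> k l; rewrite -[k]splitK -[l]splitK.
case: (fintype.split k) => a; case: (fintype.split l) => b;
  rewrite /= ?split_enum_lshift ?split_enum_rshift => e.
- by rewrite (enum_val_inj e).
- by move: (notinC a b); rewrite e eqxx.
- by move: (notinC b a); rewrite e eqxx.
- by rewrite (enum_val_inj e).
Qed.

End SplitEnum.
Arguments split_enum {T} G k.

Section SplitEnumMx.
Variables (R : realType) (p : nat) (G : {set 'I_p}).
Local Notation e := (split_enum G).

Lemma ulsubmx_split_enum (A : 'M[R]_p) : ulsubmx (mxsub e e A) = subm G A.
Proof. by apply/matrixP => a b; rewrite !mxE !split_enum_lshift. Qed.

Lemma drsubmx_split_enum (A : 'M[R]_p) : drsubmx (mxsub e e A) = subm (~: G) A.
Proof. by apply/matrixP => a b; rewrite !mxE !split_enum_rshift. Qed.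

Lemma mxsub_split_enum_block (A : 'M[R]_p) :
  A^T = A -> (forall u v, u \in G -> v \notin G -> A u v = 0) ->
  mxsub e e A = block_mx (subm G A) 0 0 (subm (~: G) A).
Proof.
move=> A_sym A_offG; rewrite -[LHS]submxK ulsubmx_split_enum drsubmx_split_enum.
have notinG (b : 'I_#|~: G|) : enum_val b \notin G.
  by have := enum_valP b; rewrite finset.in_setC.
congr block_mx; apply/matrixP => a b;
  rewrite !mxE ?split_enum_lshift ?split_enum_rshift.
- exact: A_offG (enum_valP a) (notinG b).
- by rewrite -A_sym mxE; apply: A_offG (enum_valP b) (notinG a).
Qed.

End SplitEnumMx.

Theorem theorem1 (R : realType) (p : nat) (I : finType)
    (S : I -> 'M[R]_p) (lam : R) (Wh : I -> 'M[R]_p) (G1 : {set 'I_p}) :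
  (2 <= p)%N -> (0 < #|I|)%N ->
  (forall i, psd_mx (S i)) -> 0 < lam ->
  is_minimizer lam S Wh ->
  (forall i u v, u \in G1 -> v \notin G1 -> Wh i u v = 0) ->
  is_minimizer lam (fun i => subm G1 (S i)) (fun i => subm G1 (Wh i)) /\
  is_minimizer lam (fun i => subm (~: G1) (S i)) (fun i => subm (~: G1) (Wh i)).
Proof.
move=> _ _ _ _ Wh_min Wh_offG1.
have Wh_block i : mxsub (split_enum G1) (split_enum G1) (Wh i) =
    block_mx (subm G1 (Wh i)) 0 0 (subm (~: G1) (Wh i)).
  exact: mxsub_split_enum_block (Wh_min.1 i).1 (Wh_offG1 i).
have := is_minimizer_mxsub (split_enum_bij G1) Wh_min.
rewrite (funext Wh_block) => /is_minimizer_block_diag.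
rewrite (funext (fun i => ulsubmx_split_enum G1 (S i))).
by rewrite (funext (fun i => drsubmx_split_enum G1 (S i))).
Qed.
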